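(* In the two-type setting, suppose $\phi_1\sigma>1$, and let $r=\inf\{\lambda_1(p):p\in(0,\bar p_1]\times[0,\bar p_2]\}$. Let $p^0\in(0,1)^2$ with $p^0_1+p^0_2\le1$ and $p^n=h^n(p^0)$. Then there is $\bar c\in(0,p^0_1)$ such that for every $c\in(0,\bar c]$ there is $\bar k\in\mathbb N$ with the property: for all $n\in\mathbb N$, if $p^n_1\ge c$ then there is $k\le\bar k$ with $p^{n+k}_1>\frac{3}{2r}c$.
   Context: Two-type limiting map: $\beta_1,\beta_2>0$, $\alpha(1),\alpha(2)\in[0,1)$, $\phi_i=(1-\alpha(i))\beta_i$. For $p\in[0,1]^2$, $S(p)=\beta_1p_1+\beta_2p_2$ and $f^{(i)}(p)=(1-e^{-S(p)})\beta_ip_i/S(p)$ ($=0$ if $S(p)=0$). For $\alpha\in(0,1)$ let $g_\alpha(x)=\frac{(1-\sqrt{1-4(1-\alpha)x(1-x)})^3}{8(1-\alpha)^2x^2}$ for $x\in(0,1]$ and $g_\alpha(0)=0$; let $g_0(x)=x$ for $x\le1/2$ and $g_0(x)=(1-x)^3/x^2$ for $x>1/2$. $h(p)=(h_1(p),h_2(p))$ with $h_i(p)=g_{\alpha(i)}(f^{(i)}(p))$; $\lambda_i(p)=h_i(p)/p_i$ for $p_i>0$. $\bar p_i=\sup_{x\in[0,1]}g_{\alpha(i)}(x)$. $\psi(x)=(1-e^{-x})/x$, $\psi(0)=1$. For $x\in[0,1]$ let $\Psi_n(x)=\big(\prod_{k=0}^{n-1}\psi(\beta_2h^k_2(0,x))\big)^{1/n}$,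 $\underline\Psi(x)=\liminf_{n\to\infty}\Psi_n(x)$, and $\sigma=\inf_{x\in[0,\bar p_2]}\underline\Psi(x)$. *)

From Stdlib Require Import Reals Lra ClassicalEpsilon.
Open Scope R_scope.

Definition is_glb (E : R -> Prop) (m : R) : Prop :=
  (forall x, E x -> m <= x) /\ (forall b, (forall x, E x -> b <= x) -> b <= m).

(* sup / inf as functions (chosen by epsilon; meaningful when they exist). *)
Definition Rsup (E : R -> Prop) : R := epsilon (inhabits 0) (fun m => is_lub E m).
Definition Rinf (E : R -> Prop) : R := epsilon (inhabits 0) (fun m => is_glb E m).

Definition liminf (u : nat -> R) : R :=
  Rsup (fun y => exists N : nat, y = Rinf (fun z => exists n : nat, (N <= n)%nat /\ z = u n)).

Definition g (alpha x : R) : R :=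
  if Req_EM_T alpha 0 then
    (if Rle_dec x (1/2) then x else (1 - x) ^ 3 / x ^ 2)
  else
    (if Req_EM_T x 0 then 0
     else (1 - sqrt (1 - 4 * (1 - alpha) * x * (1 - x))) ^ 3
          / (8 * (1 - alpha) ^ 2 * x ^ 2)).

Definition S (b1 b2 : R) (p : R * R) : R := b1 * fst p + b2 * snd p.

Definition f1 (b1 b2 : R) (p : R * R) : R :=
  if Req_EM_T (S b1 b2 p) 0 then 0
  else (1 - exp (- S b1 b2 p)) * b1 * fst p / S b1 b2 p.
Definition f2 (b1 b2 : R) (p : R * R) : R :=
  if Req_EM_T (S b1 b2 p) 0 then 0
  else (1 - exp (- S b1 b2 p)) * b2 * snd p / S b1 b2 p.

Definition h (a1 a2 b1 b2 : R) (p : R * R) : R * R :=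
  (g a1 (f1 b1 b2 p), g a2 (f2 b1 b2 p)).

Fixpoint h_iter (a1 a2 b1 b2 : R) (n : nat) (p : R * R) : R * R :=
  match n with
  | O => p
  | Datatypes.S m => h a1 a2 b1 b2 (h_iter a1 a2 b1 b2 m p)
  end.

Definition lambda1 (a1 a2 b1 b2 : R) (p : R * R) : R :=
  fst (h a1 a2 b1 b2 p) / fst p.

Definition pbar (alpha : R) : R :=
  Rsup (fun y => exists x, 0 <= x <= 1 /\ y = g alpha x).

Definition psi (x : R) : R := if Req_EM_T x 0 then 1 else (1 - exp (- x)) / x.

Fixpoint prod_psi (a1 a2 b1 b2 x : R) (n : nat) : R :=
  match n with
  | O => 1
  | Datatypes.S k =>
      prod_psi a1 a2 b1 b2 x k * psi (b2 * snd (h_iter a1 a2 b1 b2 k (0, x)))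
  end.

Definition Psi (a1 a2 b1 b2 x : R) (n : nat) : R :=
  Rpower (prod_psi a1 a2 b1 b2 x n) (1 / INR n).

Definition sigma_T (a1 a2 b1 b2 : R) : R :=
  Rinf (fun y => exists x, 0 <= x <= pbar a2 /\ y = liminf (Psi a1 a2 b1 b2 x)).

Definition rr (a1 a2 b1 b2 : R) : R :=
  Rinf (fun y => exists p : R * R,
          0 < fst p <= pbar a1 /\ 0 <= snd p <= pbar a2 /\ y = lambda1 a1 a2 b1 b2 p).

From Stdlib Require Import Reals Lra Lia ClassicalEpsilon Classical.
From Coquelicot Require Import Coquelicot.
Open Scope R_scope.

(* Near the axis {p1 = 0} the map h multiplies the first coordinate by about
   phi1 psi(beta2 p2), while the second coordinate shadows the axis orbit h^k(0, x).
   Along such an orbit the products phi1^n prod_{k<n} psi(beta2 h2^k(0, x)) are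
   unbounded, because phi1 sigma > 1 keeps their n-th roots eventually above 1/phi1.
   By continuity of h at the axis, every x in [0, pbar2] has a neighbourhood on which
   the first coordinate gets multiplied by a prescribed factor within a fixed number of
   steps, and compactness of [0, pbar2] makes that number uniform.  As h2 <= pbar2
   after one step, this applies to p^n as soon as p^n_1 is small. *)

Lemma exp_neg_ge t : 1 - t <= exp (- t).
Proof. pose proof (exp_ineq1_le (- t)); lra. Qed.

Lemma exp_neg_pos_le1 t : 0 <= t -> 0 < exp (- t) <= 1.
Proof.
  intros Ht; split; [apply exp_pos|].
  destruct (Req_dec t 0) as [->|]; [rewrite Ropp_0, exp_0; lra|].
  rewrite <- exp_0; left; apply exp_increasing; lra.
Qed.

Lemma exp_neg_lt1 t : 0 < t -> exp (- t) < 1.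
Proof. intros Ht; rewrite <- exp_0; apply exp_increasing; lra. Qed.

Lemma exp_neg_lipschitz s t : 0 <= s -> 0 <= t ->
  Rabs (exp (- s) - exp (- t)) <= Rabs (s - t).
Proof.
  assert (Hle : forall u v, 0 <= u <= v -> 0 <= exp (- u) - exp (- v) <= v - u).
  { intros u v Huv.
    replace (- v) with (- u + - (v - u)) by ring; rewrite exp_plus.
    pose proof (exp_neg_pos_le1 u ltac:(lra)).
    pose proof (exp_neg_pos_le1 (v - u) ltac:(lra)).
    pose proof (exp_neg_ge (v - u)); nra. }
  intros Hs Ht; destruct (Rle_dec s t).
  - specialize (Hle s t ltac:(lra)).
    rewrite Rabs_right, Rabs_left1; lra.
  - specialize (Hle t s ltac:(lra)).
    rewrite Rabs_left1, Rabs_right; lra.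
Qed.

Lemma pow_1_minus_ge t n : 0 <= t <= 1 -> 1 - INR n * t <= (1 - t) ^ n.
Proof.
  intros Ht; induction n as [|n IH]; [simpl; lra|].
  rewrite S_INR; simpl; pose proof (pos_INR n).
  pose proof (pow_le (1 - t) n ltac:(lra)); nra.
Qed.

Lemma psi_0 : psi 0 = 1.
Proof. unfold psi; destruct (Req_EM_T 0 0); [reflexivity|lra]. Qed.

Lemma psi_mul x : 0 <= x -> psi x * x = 1 - exp (- x).
Proof.
  intros Hx; unfold psi; destruct (Req_EM_T x 0) as [->|Hx0].
  - rewrite Ropp_0, exp_0; ring.
  - field; exact Hx0.
Qed.

Lemma psi_pos_le1 x : 0 <= x -> 0 < psi x <= 1.
Proof.
  intros Hx; unfold psi; destruct (Req_EM_T x 0); [lra|].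
  pose proof (exp_neg_ge x); pose proof (exp_neg_lt1 x ltac:(lra)).
  split; [apply Rdiv_lt_0_compat|apply Rle_div_l]; lra.
Qed.

(* [psi x] is the mean of [exp (- x t)] over [t] in [0, 1]. *)
Lemma psi_shift u d : 0 <= u -> 0 <= d -> psi u * exp (- d) <= psi (u + d).
Proof.
  intros Hu Hd.
  pose proof (psi_pos_le1 u Hu); pose proof (exp_neg_pos_le1 d Hd).
  destruct (Req_dec (u + d) 0) as [Hud|Hud].
  { replace (u + d) with 0 by lra; rewrite psi_0; nra. }
  apply Rmult_le_reg_r with (u + d); [lra|].
  rewrite psi_mul by lra.
  replace (- (u + d)) with (- u + - d) by ring; rewrite exp_plus.
  pose proof (psi_mul u Hu).
  pose proof (exp_ineq1_le d); pose proof (exp_plus d (- d)).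
  replace (d + - d) with 0 in * by ring; rewrite exp_0 in *.
  assert (Hdd : exp (- d) * d <= 1 - exp (- d)) by nra.
  nra.
Qed.

Lemma psi_decreasing u v : 0 <= u <= v -> psi v <= psi u.
Proof.
  intros Huv.
  pose proof (psi_pos_le1 u ltac:(lra)); pose proof (psi_pos_le1 v ltac:(lra)).
  destruct (Req_dec v 0) as [Hv|Hv]; [replace u with v by lra; lra|].
  apply Rmult_le_reg_r with v; [lra|].
  rewrite psi_mul by lra.
  replace (- v) with (- u + - (v - u)) by ring; rewrite exp_plus.
  pose proof (psi_mul u ltac:(lra)).
  pose proof (exp_neg_ge (v - u)); pose proof (exp_neg_pos_le1 (v - u) ltac:(lra)).
  assert (Hexp_le_psi : exp (- u) <= psi u).
  { destruct (Req_dec u 0) as [->|]; [rewrite Ropp_0, exp_0, psi_0; lra|].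
    apply Rmult_le_reg_r with u; [lra|].
    pose proof (exp_ineq1_le u); pose proof (exp_plus u (- u)).
    replace (u + - u) with 0 in * by ring; rewrite exp_0 in *.
    pose proof (exp_pos (- u)); nra. }
  nra.
Qed.

Lemma psi_ge_exp_dist u v : 0 <= u -> 0 <= v -> psi u * exp (- Rabs (v - u)) <= psi v.
Proof.
  intros Hu Hv; destruct (Rle_dec u v).
  - rewrite Rabs_right by lra.
    replace v with (u + (v - u)) at 2 by ring; apply psi_shift; lra.
  - pose proof (psi_decreasing v u ltac:(lra)); pose proof (psi_pos_le1 u Hu).
    pose proof (exp_neg_pos_le1 (Rabs (v - u)) (Rabs_pos _)); nra.
Qed.

Lemma g_0 a : g a 0 = 0.
Proof.
  unfold g; destruct (Req_EM_T a 0).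
  - destruct (Rle_dec 0 (1 / 2)); [reflexivity|lra].
  - destruct (Req_EM_T 0 0); [reflexivity|lra].
Qed.

Lemma one_minus_sqrt_bounds u : 0 <= u <= 1 -> u / 2 <= 1 - sqrt (1 - u) <= u.
Proof.
  intros Hu.
  pose proof (sqrt_pos (1 - u)); pose proof (sqrt_sqrt (1 - u) ltac:(lra)).
  assert (sqrt (1 - u) <= 1).
  { rewrite <- sqrt_1 at 2; apply sqrt_le_1_alt; lra. }
  split; [|assert (0 <= sqrt (1 - u) * (1 - sqrt (1 - u))) by (apply Rmult_le_pos; lra); lra].
  destruct (Rle_dec (sqrt (1 - u)) (1 - u / 2)); [lra|].
  assert ((1 - u / 2) * (1 - u / 2) < sqrt (1 - u) * sqrt (1 - u))
    by (apply Rmult_le_0_lt_compat; lra).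
  nra.
Qed.

Lemma g_bounds a x : 0 <= a < 1 -> 0 <= x <= 1 ->
  (1 - a) * x * (1 - x) ^ 3 <= g a x <= 8 * x.
Proof.
  intros Ha Hx.
  assert (Hx3 : 0 <= (1 - x) ^ 3 <= 1).
  { split; [apply pow_le; lra|rewrite <- (pow1 3); apply pow_incr; lra]. }
  unfold g; destruct (Req_EM_T a 0) as [->|Ha0].
  - destruct (Rle_dec x (1 / 2)); [split; nra|].
    assert (Hx2 : 0 < x ^ 2) by nra.
    assert ((1 - x) ^ 3 <= x ^ 3) by (apply pow_incr; lra).
    split; [apply (proj1 (Rle_div_r _ _ _ Hx2))|apply (proj2 (Rle_div_l _ _ _ Hx2))].
    + assert (x ^ 3 <= 1) by (rewrite <- (pow1 3); apply pow_incr; lra).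
      replace ((1 - 0) * x * (1 - x) ^ 3 * x ^ 2) with (x ^ 3 * (1 - x) ^ 3) by ring.
      rewrite <- (Rmult_1_l ((1 - x) ^ 3)) at 2; apply Rmult_le_compat_r; lra.
    + replace (8 * x * x ^ 2) with (8 * x ^ 3) by ring.
      assert (0 <= x ^ 3) by (apply pow_le; lra); lra.
  - destruct (Req_EM_T x 0) as [->|Hx0]; [simpl; lra|].
    set (u := 4 * (1 - a) * x * (1 - x)).
    assert (Hu : 0 <= u <= (1 - a)).
    { unfold u; split; [apply Rmult_le_pos; nra|].
      pose proof (pow2_ge_0 (2 * x - 1)); simpl in *; nra. }
    destruct (one_minus_sqrt_bounds u ltac:(lra)) as [Hs1 Hs2].
    set (s := 1 - sqrt (1 - u)) in *.
    assert (HD : 0 < 8 * (1 - a) ^ 2 * x ^ 2).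
    { apply Rmult_lt_0_compat; [apply Rmult_lt_0_compat|]; try apply pow_lt; lra. }
    split; [apply (proj1 (Rle_div_r _ _ _ HD))|apply (proj2 (Rle_div_l _ _ _ HD))].
    + assert ((u / 2) ^ 3 <= s ^ 3) by (apply pow_incr; lra).
      replace ((1 - a) * x * (1 - x) ^ 3 * (8 * (1 - a) ^ 2 * x ^ 2)) with ((u / 2) ^ 3)
        by (unfold u; field).
      lra.
    + assert (s ^ 3 <= u ^ 3) by (apply pow_incr; lra).
      assert (Hcube : 0 <= (1 - a) ^ 3 * (1 - x) ^ 3 <= (1 - a) ^ 2).
      { split; [apply Rmult_le_pos; apply pow_le; lra|].
        replace ((1 - a) ^ 3 * (1 - x) ^ 3) with ((1 - a) ^ 2 * ((1 - a) * (1 - x) ^ 3))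
          by ring.
        rewrite <- (Rmult_1_r ((1 - a) ^ 2)) at 2.
        apply Rmult_le_compat_l; [apply pow_le|]; nra. }
      assert (0 <= x ^ 3) by (apply pow_le; lra).
      replace (u ^ 3) with (64 * x ^ 3 * ((1 - a) ^ 3 * (1 - x) ^ 3)) in * by (unfold u; ring).
      replace (8 * x * (8 * (1 - a) ^ 2 * x ^ 2)) with (64 * x ^ 3 * (1 - a) ^ 2) by ring.
      nra.
Qed.

Lemma g_nonneg_le a x : 0 <= a < 1 -> 0 <= x <= 1 -> 0 <= g a x <= 8 * x.
Proof.
  intros Ha Hx; pose proof (g_bounds a x Ha Hx).
  pose proof (pow_le (1 - x) 3 ltac:(lra)).
  assert (0 <= (1 - a) * x * (1 - x) ^ 3) by (apply Rmult_le_pos; [apply Rmult_le_pos|]; lra).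
  lra.
Qed.

Definition continuous_within (D : R -> Prop) (F : R -> R) (z : R) : Prop :=
  forall eps, 0 < eps -> exists del, 0 < del /\
    forall x, D x -> Rabs (x - z) < del -> Rabs (F x - F z) < eps.

Lemma continuous_within_of_ex_derive D F z : ex_derive F z -> continuous_within D F z.
Proof.
  intros HF eps Heps.
  pose proof (ex_derive_continuous F z HF) as Hc; apply continuity_pt_filterlim in Hc.
  destruct (Hc eps Heps) as [del [Hdel Hnear]].
  exists del; split; [exact Hdel|]; intros x _ Hxz.
  destruct (Req_dec x z) as [->|Hxz']; [rewrite Rminus_diag, Rabs_R0; exact Heps|].
  apply (Hnear x); split; [split; [constructor|auto]|exact Hxz].
Qed.

Lemma continuous_within_local D F G z r : 0 < r -> F z = G z ->
  (forall x, D x -> Rabs (x - z) < r -> F x = G x) ->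
  continuous_within D G z -> continuous_within D F z.
Proof.
  intros Hr Hz Hloc HG eps Heps.
  destruct (HG eps Heps) as [del [Hdel Hnear]].
  exists (Rmin del r); split; [apply Rmin_pos; lra|]; intros x Hx Hxz.
  pose proof (Rmin_l del r); pose proof (Rmin_r del r).
  rewrite Hloc, Hz by (auto; lra); apply Hnear; auto; lra.
Qed.

Lemma continuous_within_split D F z :
  continuous_within (fun x => D x /\ x <= z) F z ->
  continuous_within (fun x => D x /\ z <= x) F z -> continuous_within D F z.
Proof.
  intros Hl Hr eps Heps.
  destruct (Hl eps Heps) as [dl [Hdl Hnl]]; destruct (Hr eps Heps) as [dr [Hdr Hnr]].
  exists (Rmin dl dr); split; [apply Rmin_pos; lra|]; intros x Hx Hxz.
  pose proof (Rmin_l dl dr); pose proof (Rmin_r dl dr).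
  destruct (Rle_dec x z); [apply Hnl|apply Hnr]; try split; auto; lra.
Qed.

Lemma g_continuous_at_0 a : 0 <= a < 1 -> continuous_within (fun x => 0 <= x <= 1) (g a) 0.
Proof.
  intros Ha eps Heps; exists (eps / 8); split; [lra|]; intros x Hx Hxz.
  rewrite g_0, Rminus_0_r in *; pose proof (g_nonneg_le a x Ha Hx).
  rewrite Rabs_right in * by lra; lra.
Qed.

Lemma g0_continuous D z : 0 < z -> continuous_within D (g 0) z.
Proof.
  intros Hz.
  assert (Hleft : forall x, x <= 1 / 2 -> g 0 x = x).
  { intros x Hx; unfold g; destruct (Req_EM_T 0 0); [|lra].
    destruct (Rle_dec x (1 / 2)); [reflexivity|lra]. }
  assert (Hright : forall x, 1 / 2 <= x -> g 0 x = (1 - x) ^ 3 / x ^ 2).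
  { intros x Hx; unfold g; destruct (Req_EM_T 0 0); [|lra].
    destruct (Rle_dec x (1 / 2)); [replace x with (1 / 2) by lra; field|reflexivity]. }
  assert (Hcont_left : forall D', continuous_within D' (fun x => x) z)
    by (intros D'; apply continuous_within_of_ex_derive; auto_derive; auto).
  assert (Hcont_right : forall D', continuous_within D' (fun x => (1 - x) ^ 3 / x ^ 2) z).
  { intros D'; apply continuous_within_of_ex_derive; auto_derive.
    rewrite Rmult_1_r; apply Rmult_integral_contrapositive; split; lra. }
  destruct (Rtotal_order z (1 / 2)) as [Hlt|[Heq|Hgt]].
  - apply continuous_within_local with (G := fun x => x) (r := 1 / 2 - z);
      [lra|apply Hleft; lra| |apply Hcont_left].
    intros x _ Hxz; apply Rabs_def2 in Hxz; apply Hleft; lra.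
  - apply continuous_within_split.
    + apply continuous_within_local with (G := fun x => x) (r := 1);
        [lra|apply Hleft; lra| |apply Hcont_left].
      intros x [_ Hx] _; apply Hleft; lra.
    + apply continuous_within_local with (G := fun x => (1 - x) ^ 3 / x ^ 2) (r := 1);
        [lra|apply Hright; lra| |apply Hcont_right].
      intros x [_ Hx] _; apply Hright; lra.
  - apply continuous_within_local with (G := fun x => (1 - x) ^ 3 / x ^ 2) (r := z - 1 / 2);
      [lra|apply Hright; lra| |apply Hcont_right].
    intros x _ Hxz; apply Rabs_def2 in Hxz; apply Hright; lra.
Qed.

Lemma g_continuous_pos D a z : 0 < a < 1 -> 0 < z < 1 -> continuous_within D (g a) z.
Proof.
  intros Ha Hz.
  apply continuous_within_local with (r := z)
    (G := fun x => (1 - sqrt (1 - 4 * (1 - a) * x * (1 - x))) ^ 3 / (8 * (1 - a) ^ 2 * x ^ 2));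
    [lra| | |].
  - unfold g; destruct (Req_EM_T a 0); [lra|]; destruct (Req_EM_T z 0); [lra|reflexivity].
  - intros x _ Hxz; apply Rabs_def2 in Hxz.
    unfold g; destruct (Req_EM_T a 0); [lra|]; destruct (Req_EM_T x 0); [lra|reflexivity].
  - apply continuous_within_of_ex_derive; auto_derive; repeat split.
    + pose proof (pow2_ge_0 (2 * z - 1)); simpl in *; nra.
    + apply Rgt_not_eq, Rmult_lt_0_compat; [apply Rmult_lt_0_compat|]; nra.
Qed.

Lemma g_continuous a z : 0 <= a < 1 -> 0 <= z < 1 ->
  continuous_within (fun x => 0 <= x <= 1) (g a) z.
Proof.
  intros Ha Hz.
  destruct (Req_dec z 0) as [->|Hz0]; [apply g_continuous_at_0, Ha|].
  destruct (Req_dec a 0) as [->|Ha0]; [apply g0_continuous; lra|].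
  apply g_continuous_pos; lra.
Qed.

Lemma Rsup_is_lub (E : R -> Prop) : (exists x, E x) -> bound E -> is_lub E (Rsup E).
Proof.
  intros Hne Hb; destruct (completeness E Hb Hne) as [m Hm].
  unfold Rsup; apply epsilon_spec; exists m; exact Hm.
Qed.

Lemma Rinf_is_glb (E : R -> Prop) :
  (exists x, E x) -> (exists m, forall x, E x -> m <= x) -> is_glb E (Rinf E).
Proof.
  intros [x0 Hx0] [m Hm].
  destruct (completeness (fun y => E (- y))) as [M [HM1 HM2]].
  - exists (- m); intros y Hy; specialize (Hm _ Hy); lra.
  - exists (- x0); rewrite Ropp_involutive; exact Hx0.
  - unfold Rinf; apply epsilon_spec; exists (- M); split.
    + intros x Hx; assert (Hx' : E (- - x)) by (rewrite Ropp_involutive; exact Hx).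
      specialize (HM1 _ Hx'); lra.
    + intros b Hb; assert (M <= - b); [|lra].
      apply HM2; intros y Hy; specialize (Hb _ Hy); lra.
Qed.

Section Liminf.

Variable u : nat -> R.
Hypothesis Hu : forall n, 0 <= u n <= 1.

Let tail_inf (N : nat) : R := Rinf (fun z => exists n, (N <= n)%nat /\ z = u n).

Lemma tail_inf_is_glb N :
  is_glb (fun z => exists n, (N <= n)%nat /\ z = u n) (tail_inf N) /\ 0 <= tail_inf N.
Proof.
  assert (G : is_glb (fun z => exists n, (N <= n)%nat /\ z = u n) (tail_inf N)).
  { apply Rinf_is_glb; [exists (u N), N; auto|].
    exists 0; intros z [n [_ ->]]; apply Hu. }
  split; [exact G|apply (proj2 G)].
  intros z [n [_ ->]]; apply Hu.
Qed.

Lemma liminf_is_lub : is_lub (fun y => exists N, y = tail_inf N) (liminf u).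
Proof.
  apply Rsup_is_lub; [exists (tail_inf 0), 0%nat; reflexivity|].
  exists 1; intros y [N ->].
  destruct (tail_inf_is_glb N) as [[Hlb _] _].
  apply Rle_trans with (u N); [apply Hlb; exists N; auto|apply Hu].
Qed.

Lemma liminf_nonneg : 0 <= liminf u.
Proof.
  apply Rle_trans with (tail_inf 0); [apply tail_inf_is_glb|].
  apply (proj1 liminf_is_lub); exists 0%nat; reflexivity.
Qed.

Lemma lt_liminf_eventually t : t < liminf u -> exists N, forall n, (N <= n)%nat -> t < u n.
Proof.
  intros Ht.
  assert (HN : exists N, t < tail_inf N).
  { apply NNPP; intros Hno.
    assert (liminf u <= t); [|lra].
    apply (proj2 liminf_is_lub); intros y [N ->].
    apply Rnot_lt_le; intros HtN; apply Hno; exists N; exact HtN. }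
  destruct HN as [N HN]; exists N; intros n Hn.
  destruct (tail_inf_is_glb N) as [[Hlb _] _].
  apply Rlt_le_trans with (tail_inf N); [exact HN|apply Hlb; exists n; auto].
Qed.

End Liminf.

Lemma Rpower_root_pos_le1 P n : 0 < P <= 1 -> 0 < Rpower P (1 / INR n) <= 1.
Proof.
  intros HP; split; [apply exp_pos|].
  unfold Rpower; apply Rle_trans with (exp 0); [|rewrite exp_0; lra].
  assert (ln P <= 0) by (rewrite <- ln_1; apply ln_le; lra).
  assert (0 <= 1 / INR n).
  { destruct n; [simpl; unfold Rdiv; rewrite Rinv_0; lra|].
    apply Rlt_le, Rdiv_lt_0_compat; [lra|apply lt_0_INR; lia]. }
  destruct (Req_dec (1 / INR n * ln P) 0) as [->|]; [lra|].
  left; apply exp_increasing; nra.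
Qed.

(* If the geometric means of [P] eventually exceed [t] with [phi * t > 1], then
   [phi ^ n * P n > (phi * t) ^ n], which is unbounded. *)
Lemma pow_mul_unbounded (P : nat -> R) phi : (forall n, 0 < P n <= 1) -> 0 < phi ->
  1 < phi * liminf (fun n => Rpower (P n) (1 / INR n)) -> forall Q, exists n, Q < phi ^ n * P n.
Proof.
  intros HP Hphi Hlim Q.
  set (L := liminf (fun n => Rpower (P n) (1 / INR n))) in *.
  assert (HinvL : / phi < L).
  { apply Rmult_lt_reg_l with phi; [exact Hphi|rewrite Rinv_r; lra]. }
  pose proof (Rinv_0_lt_compat phi Hphi).
  set (t := (L + / phi) / 2).
  assert (Ht : 0 < t < L) by (unfold t; lra).
  assert (Hgap : 0 < phi * t - 1).
  { unfold t; replace (phi * ((L + / phi) / 2) - 1) with ((phi * L - 1) / 2) by (field; lra).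
    lra. }
  assert (Hroots : forall n, 0 <= Rpower (P n) (1 / INR n) <= 1)
    by (intros n; pose proof (Rpower_root_pos_le1 (P n) n (HP n)); lra).
  destruct (lt_liminf_eventually _ Hroots t (proj2 Ht)) as [N HN].
  destruct (INR_unbounded (Q / (phi * t - 1))) as [M HM].
  set (n := (N + M + 1)%nat); exists n.
  assert (HnM : INR M <= INR n) by (apply le_INR; unfold n; lia).
  assert (Hn : 0 < INR n) by (apply lt_0_INR; unfold n; lia).
  assert (Hroot : t ^ n < P n).
  { pose proof (HP n).
    assert (Hback : Rpower (Rpower (P n) (1 / INR n)) (INR n) = P n).
    { rewrite Rpower_mult; replace (1 / INR n * INR n) with 1 by (field; lra).
      apply Rpower_1; lra. }
    rewrite <- Hback, <- (Rpower_pow n t) by lra.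
    apply Rlt_Rpower_l; [exact Hn|split; [lra|apply HN; unfold n; lia]]. }
  assert (Hpow : 1 + INR n * (phi * t - 1) <= (phi * t) ^ n).
  { replace (phi * t) with (1 + (phi * t - 1)) at 2 by ring; apply Rle_pow_lin; lra. }
  assert (HQ : Q < INR M * (phi * t - 1)).
  { apply Rmult_lt_reg_r with (/ (phi * t - 1)); [apply Rinv_0_lt_compat; lra|].
    replace (INR M * (phi * t - 1) * / (phi * t - 1)) with (INR M) by (field; lra).
    exact HM. }
  assert (phi ^ n * t ^ n < phi ^ n * P n) by (apply Rmult_lt_compat_l; [apply pow_lt|]; lra).
  rewrite <- Rpow_mult_distr in *.
  assert (INR M * (phi * t - 1) <= INR n * (phi * t - 1)) by (apply Rmult_le_compat_r; lra).
  lra.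
Qed.

(* Shrinking each radius to at most [1 / (n + 1)] lets a Lebesgue number of the cover
   bound the tags [n]. *)
Lemma interval_uniform_cover a b (Good : R -> nat -> R -> Prop) :
  (forall x, a <= x <= b -> exists n del, 0 < del /\ Good x n del) ->
  exists N d, 0 < d /\ forall y, a <= y <= b ->
    exists x n del, Good x n del /\ (n <= N)%nat /\ d <= del /\ Rabs (y - x) < del.
Proof.
  intros Hcover.
  destruct (choice (fun x (nd : nat * R) =>
                      0 < snd nd /\ (a <= x <= b -> Good x (fst nd) (snd nd)))) as [f Hf].
  { intros x; destruct (Rle_dec a x); [destruct (Rle_dec x b)|].
    - destruct (Hcover x ltac:(lra)) as [n [del [Hdel Hgood]]].
      exists (n, del); split; [exact Hdel|intros _; exact Hgood].
    - exists (0%nat, 1); split; [simpl; lra|lra].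
    - exists (0%nat, 1); split; [simpl; lra|lra]. }
  assert (Hpos : forall x, 0 < Rmin (snd (f x)) (/ (INR (fst (f x)) + 1))).
  { intros x; pose proof (pos_INR (fst (f x))).
    apply Rmin_pos; [apply Hf|apply Rinv_0_lt_compat; lra]. }
  destruct (compactness_value_1d a b (fun x => mkposreal _ (Hpos x))) as [d Hd].
  destruct (INR_unbounded (/ d)) as [N HN].
  exists N, d; split; [apply cond_pos|]; intros y Hy.
  destruct (NNPP _ (Hd y Hy)) as [x [Hx [Hyx Hdx]]]; simpl in Hyx, Hdx.
  pose proof (Rmin_l (snd (f x)) (/ (INR (fst (f x)) + 1))).
  pose proof (Rmin_r (snd (f x)) (/ (INR (fst (f x)) + 1))).
  exists x, (fst (f x)), (snd (f x)); repeat split; [apply Hf; exact Hx| |lra|lra].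
  assert (Hn : INR (fst (f x)) + 1 <= / d).
  { pose proof (pos_INR (fst (f x))); pose proof (cond_pos d).
    rewrite <- (Rinv_inv (INR (fst (f x)) + 1)); apply Rinv_le_contravar; lra. }
  apply INR_le; lra.
Qed.

Definition quadrant (q : R * R) : Prop := 0 <= fst q /\ 0 <= snd q.

Definition axis_close (d y : R) (q : R * R) : Prop := fst q < d /\ Rabs (snd q - y) < d.

Lemma axis_close_weaken d d' y q : d <= d' -> axis_close d y q -> axis_close d' y q.
Proof. intros Hd [H1 H2]; split; lra. Qed.

Lemma psi_mul_le s t : 0 <= s <= t -> 0 <= psi t * s <= 1 /\ psi t * s <= s.
Proof.
  intros Hst.
  pose proof (psi_pos_le1 t ltac:(lra)); pose proof (psi_mul t ltac:(lra)).
  pose proof (exp_pos (- t)).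
  assert (psi t * s <= psi t * t) by (apply Rmult_le_compat_l; lra).
  split; [split|]; nra.
Qed.

Section LimitingMap.

Variables a1 a2 b1 b2 : R.
Hypothesis Hb1 : 0 < b1.
Hypothesis Hb2 : 0 < b2.
Hypothesis Ha1 : 0 <= a1 < 1.
Hypothesis Ha2 : 0 <= a2 < 1.

Local Notation hm := (h a1 a2 b1 b2).
Local Notation hn := (h_iter a1 a2 b1 b2).

Lemma S_nonneg q : quadrant q -> 0 <= S b1 b2 q.
Proof. intros [H1 H2]; unfold S; nra. Qed.

Lemma f1_eq q : quadrant q -> f1 b1 b2 q = psi (S b1 b2 q) * (b1 * fst q).
Proof.
  intros Hq; unfold f1; destruct (Req_EM_T (S b1 b2 q) 0) as [HS|HS].
  - destruct Hq; unfold S in HS; replace (fst q) with 0 by nra; ring.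
  - unfold psi; destruct (Req_EM_T (S b1 b2 q) 0); [contradiction|field; exact HS].
Qed.

Lemma f2_eq q : quadrant q -> f2 b1 b2 q = psi (S b1 b2 q) * (b2 * snd q).
Proof.
  intros Hq; unfold f2; destruct (Req_EM_T (S b1 b2 q) 0) as [HS|HS].
  - destruct Hq; unfold S in HS; replace (snd q) with 0 by nra; ring.
  - unfold psi; destruct (Req_EM_T (S b1 b2 q) 0); [contradiction|field; exact HS].
Qed.

Lemma f1_bounds q : quadrant q -> 0 <= f1 b1 b2 q <= 1 /\ f1 b1 b2 q <= b1 * fst q.
Proof.
  intros Hq; rewrite f1_eq by exact Hq; apply psi_mul_le.
  destruct Hq; unfold S; nra.
Qed.

Lemma f2_bounds q : quadrant q -> 0 <= f2 b1 b2 q <= 1 /\ f2 b1 b2 q <= b2 * snd q.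
Proof.
  intros Hq; rewrite f2_eq by exact Hq; apply psi_mul_le.
  destruct Hq; unfold S; nra.
Qed.

Lemma h_quadrant q : quadrant q -> quadrant (hm q).
Proof.
  intros Hq; destruct (f1_bounds q Hq) as [Hf1 _]; destruct (f2_bounds q Hq) as [Hf2 _].
  pose proof (g_nonneg_le a1 _ Ha1 Hf1); pose proof (g_nonneg_le a2 _ Ha2 Hf2).
  split; simpl; lra.
Qed.

Lemma h1_le q : quadrant q -> fst (hm q) <= 8 * b1 * fst q.
Proof.
  intros Hq; destruct (f1_bounds q Hq) as [Hf1 Hf1'].
  pose proof (g_nonneg_le a1 _ Ha1 Hf1); simpl; lra.
Qed.

Lemma h_axis y : 0 <= y -> hm (0, y) = (0, g a2 (1 - exp (- (b2 * y)))).
Proof.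
  intros Hy; assert (Hq : quadrant (0, y)) by (split; simpl; lra).
  unfold h; rewrite f1_eq, f2_eq by exact Hq; simpl.
  rewrite Rmult_0_r, Rmult_0_r, g_0.
  unfold S; simpl; rewrite Rmult_0_r, Rplus_0_l, psi_mul by nra; reflexivity.
Qed.

(* Since [1 - exp (- S) = psi S * (b1 q1 + b2 q2)], [f2 q] differs from [1 - exp (- S)] by
   [psi S * b1 q1 <= b1 q1]. *)
Lemma f2_near_axis q y : quadrant q -> 0 <= y ->
  Rabs (f2 b1 b2 q - (1 - exp (- (b2 * y)))) <= 2 * b1 * fst q + b2 * Rabs (snd q - y).
Proof.
  intros Hq Hy; pose proof (S_nonneg q Hq) as HS.
  assert (Hf2 : f2 b1 b2 q = (1 - exp (- S b1 b2 q)) - psi (S b1 b2 q) * (b1 * fst q)).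
  { rewrite f2_eq, <- psi_mul by assumption; unfold S; ring. }
  destruct (psi_mul_le (b1 * fst q) (S b1 b2 q)) as [[Hp0 _] Hp1];
    [destruct Hq; unfold S; nra|].
  pose proof (exp_neg_lipschitz (S b1 b2 q) (b2 * y) HS ltac:(nra)) as Hlip.
  assert (HSy : Rabs (S b1 b2 q - b2 * y) <= b1 * fst q + b2 * Rabs (snd q - y)).
  { unfold S; replace (b1 * fst q + b2 * snd q - b2 * y) with (b1 * fst q + b2 * (snd q - y))
      by ring.
    eapply Rle_trans; [apply Rabs_triang|].
    rewrite !Rabs_mult, (Rabs_right b1), (Rabs_right b2), (Rabs_right (fst q))
      by (destruct Hq; lra).
    lra. }
  rewrite Hf2.
  replace (1 - exp (- S b1 b2 q) - psi (S b1 b2 q) * (b1 * fst q) - (1 - exp (- (b2 * y))))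
    with ((exp (- (b2 * y)) - exp (- S b1 b2 q)) - psi (S b1 b2 q) * (b1 * fst q)) by ring.
  eapply Rle_trans; [apply Rabs_triang|].
  rewrite Rabs_Ropp, Rabs_minus_sym, (Rabs_right (psi _ * _)) by lra; lra.
Qed.

Lemma h_continuous_at_axis y eps : 0 <= y -> 0 < eps -> exists del, 0 < del /\
  forall q, quadrant q -> axis_close del y q -> axis_close eps (snd (hm (0, y))) (hm q).
Proof.
  intros Hy Heps; rewrite h_axis by exact Hy; simpl.
  set (z := 1 - exp (- (b2 * y))).
  assert (Hz : 0 <= z < 1) by (unfold z; pose proof (exp_neg_pos_le1 (b2 * y) ltac:(nra)); lra).
  destruct (g_continuous a2 z Ha2 Hz eps Heps) as [dg [Hdg Hg]].
  pose proof (Rmin_l (dg / (2 * b1 + b2)) (eps / (8 * b1))).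
  pose proof (Rmin_r (dg / (2 * b1 + b2)) (eps / (8 * b1))).
  set (del := Rmin (dg / (2 * b1 + b2)) (eps / (8 * b1))) in *.
  assert (Hdel : 0 < del) by (apply Rmin_pos; apply Rdiv_lt_0_compat; lra).
  exists del; split; [exact Hdel|]; intros q Hq [Hq1 Hq2]; split.
  - pose proof (h1_le q Hq).
    assert (8 * b1 * fst q < 8 * b1 * (eps / (8 * b1))) by (apply Rmult_lt_compat_l; lra).
    replace (8 * b1 * (eps / (8 * b1))) with eps in * by (field; lra); lra.
  - apply Hg; [apply f2_bounds; exact Hq|].
    pose proof (f2_near_axis q y Hq Hy) as Hf2; fold z in Hf2.
    assert (Hsmall : (2 * b1 + b2) * del <= dg).
    { apply Rle_trans with ((2 * b1 + b2) * (dg / (2 * b1 + b2)));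
        [apply Rmult_le_compat_l; lra|right; field; lra]. }
    assert (2 * b1 * fst q < 2 * b1 * del) by (apply Rmult_lt_compat_l; lra).
    assert (b2 * Rabs (snd q - y) < b2 * del) by (apply Rmult_lt_compat_l; lra).
    lra.
Qed.

Lemma h_iter_quadrant n q : quadrant q -> quadrant (hn n q).
Proof. intros Hq; induction n as [|n IH]; [exact Hq|apply h_quadrant, IH]. Qed.

Lemma h_iter_add n k q : hn (n + k) q = hn k (hn n q).
Proof.
  induction k as [|k IH]; [rewrite Nat.add_0_r; reflexivity|].
  rewrite Nat.add_succ_r; simpl; rewrite IH; reflexivity.
Qed.

Lemma h_iter_axis n x : 0 <= x ->
  hn n (0, x) = (0, snd (hn n (0, x))) /\ 0 <= snd (hn n (0, x)).
Proof.
  intros Hx; induction n as [|n [Hax Hpos]]; [simpl; auto|].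
  change (hn (Datatypes.S n) (0, x)) with (hm (hn n (0, x))).
  rewrite Hax, h_axis by exact Hpos; simpl; split; [reflexivity|].
  destruct (h_quadrant (0, snd (hn n (0, x)))) as [_ H]; [split; simpl; lra|].
  rewrite h_axis in H by exact Hpos; exact H.
Qed.

Lemma h_iter_near_axis x n eps : 0 <= x -> 0 < eps -> exists del, 0 < del /\
  forall q, quadrant q -> axis_close del x q ->
  forall j, (j <= n)%nat -> axis_close eps (snd (hn j (0, x))) (hn j q).
Proof.
  intros Hx; revert eps; induction n as [|n IH]; intros eps Heps.
  { exists eps; split; [exact Heps|]; intros q _ Hq j Hj.
    replace j with 0%nat by lia; exact Hq. }
  destruct (h_iter_axis n x Hx) as [Hax Hpos].
  destruct (h_continuous_at_axis _ eps Hpos Heps) as [d1 [Hd1 Hstep]].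
  destruct (IH (Rmin eps d1) ltac:(apply Rmin_pos; lra)) as [del [Hdel Hnear]].
  exists del; split; [exact Hdel|]; intros q Hq Hclose j Hj.
  destruct (proj1 (Nat.le_succ_r j n) Hj) as [Hjn | ->].
  - apply axis_close_weaken with (Rmin eps d1); [apply Rmin_l|auto].
  - simpl; rewrite Hax; apply Hstep; [apply h_iter_quadrant; exact Hq|].
    apply axis_close_weaken with (Rmin eps d1); [apply Rmin_r|auto].
Qed.

Lemma h1_ge q : quadrant q -> b1 * fst q <= 1 / 2 ->
  (1 - a1) * b1 * psi (b2 * snd q) * exp (- (b1 * fst q)) * (1 - b1 * fst q) ^ 3 * fst q
  <= fst (hm q).
Proof.
  intros Hq Hsmall; destruct (f1_bounds q Hq) as [Hf1 Hf1le].
  pose proof (g_bounds a1 _ Ha1 Hf1) as [Hg _].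
  change (fst (hm q)) with (g a1 (f1 b1 b2 q)).
  destruct Hq as [Hq1 Hq2].
  pose proof (psi_pos_le1 (b2 * snd q) ltac:(nra)).
  pose proof (exp_neg_pos_le1 (b1 * fst q) ltac:(nra)).
  set (L := psi (b2 * snd q) * exp (- (b1 * fst q)) * (b1 * fst q)).
  assert (HL : 0 <= L <= f1 b1 b2 q).
  { split; [unfold L; apply Rmult_le_pos; nra|].
    rewrite f1_eq by (split; assumption); unfold L.
    apply Rmult_le_compat_r; [nra|].
    replace (S b1 b2 q) with (b2 * snd q + b1 * fst q) by (unfold S; ring).
    apply psi_shift; nra. }
  assert (H3 : (1 - b1 * fst q) ^ 3 <= (1 - f1 b1 b2 q) ^ 3) by (apply pow_incr; lra).
  assert (0 <= (1 - b1 * fst q) ^ 3) by (apply pow_le; lra).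
  assert (L * (1 - b1 * fst q) ^ 3 <= f1 b1 b2 q * (1 - f1 b1 b2 q) ^ 3)
    by (apply Rmult_le_compat; lra).
  replace ((1 - a1) * b1 * psi (b2 * snd q) * exp (- (b1 * fst q)) * (1 - b1 * fst q) ^ 3 * fst q)
    with ((1 - a1) * (L * (1 - b1 * fst q) ^ 3)) by (unfold L; ring).
  apply Rle_trans with ((1 - a1) * (f1 b1 b2 q * (1 - f1 b1 b2 q) ^ 3));
    [apply Rmult_le_compat_l; lra|rewrite <- Rmult_assoc; exact Hg].
Qed.

Lemma one_minus_prod3_ge u v w : 0 <= u <= 1 -> 0 <= v <= 1 -> 0 <= w <= 1 ->
  1 - u - v - w <= (1 - u) * (1 - v) * (1 - w).
Proof. intros Hu Hv Hw; assert (0 <= u * v * (1 - w)) by (apply Rmult_le_pos; nra); nra. Qed.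

Lemma h1_ge_near_axis q y d : quadrant q -> 0 <= y -> 0 <= d ->
  (b2 + 4 * b1) * d <= 1 / 2 -> fst q <= d -> Rabs (snd q - y) <= d ->
  (1 - a1) * b1 * psi (b2 * y) * (1 - (b2 + 4 * b1) * d) * fst q <= fst (hm q).
Proof.
  intros Hq Hy Hd Hsmall Hq1 Hq2.
  eapply Rle_trans; [|apply h1_ge; [exact Hq|destruct Hq; nra]].
  destruct Hq as [Hq1' Hq2'].
  assert (0 <= b1 * d) by (apply Rmult_le_pos; lra).
  assert (0 <= b2 * d) by (apply Rmult_le_pos; lra).
  assert (b1 * fst q <= b1 * d) by (apply Rmult_le_compat_l; lra).
  pose proof (psi_pos_le1 (b2 * y) ltac:(nra)) as HP; set (P := psi (b2 * y)) in *.
  assert (Hpsi : P * (1 - b2 * d) <= psi (b2 * snd q)).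
  { apply Rle_trans with (P * exp (- Rabs (b2 * snd q - b2 * y)));
      [|apply psi_ge_exp_dist; nra].
    apply Rmult_le_compat_l; [lra|].
    eapply Rle_trans; [|apply exp_neg_ge].
    replace (b2 * snd q - b2 * y) with (b2 * (snd q - y)) by ring.
    rewrite Rabs_mult, (Rabs_right b2) by lra; nra. }
  assert (Hexp : 1 - b1 * d <= exp (- (b1 * fst q)))
    by (eapply Rle_trans; [|apply exp_neg_ge]; lra).
  assert (Hcube : 1 - 3 * (b1 * d) <= (1 - b1 * fst q) ^ 3).
  { apply Rle_trans with ((1 - b1 * d) ^ 3).
    - replace 3 with (INR 3) by (simpl; ring); apply pow_1_minus_ge; lra.
    - apply pow_incr; lra. }
  pose proof (one_minus_prod3_ge (b2 * d) (b1 * d) (3 * (b1 * d))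
                ltac:(lra) ltac:(lra) ltac:(lra)).
  assert (Hfactors : P * (1 - (b2 + 4 * b1) * d) <=
          psi (b2 * snd q) * exp (- (b1 * fst q)) * (1 - b1 * fst q) ^ 3).
  { apply Rle_trans with (P * (1 - b2 * d) * (1 - b1 * d) * (1 - 3 * (b1 * d))).
    - replace (P * (1 - b2 * d) * (1 - b1 * d) * (1 - 3 * (b1 * d)))
        with (P * ((1 - b2 * d) * (1 - b1 * d) * (1 - 3 * (b1 * d)))) by ring.
      apply Rmult_le_compat_l; lra.
    - apply Rmult_le_compat; [| |apply Rmult_le_compat|]; try lra;
        repeat apply Rmult_le_pos; lra. }
  replace ((1 - a1) * b1 * P * (1 - (b2 + 4 * b1) * d) * fst q)
    with ((1 - a1) * b1 * fst q * (P * (1 - (b2 + 4 * b1) * d))) by ring.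
  replace ((1 - a1) * b1 * psi (b2 * snd q) * exp (- (b1 * fst q)) * (1 - b1 * fst q) ^ 3 * fst q)
    with ((1 - a1) * b1 * fst q * (psi (b2 * snd q) * exp (- (b1 * fst q)) * (1 - b1 * fst q) ^ 3))
    by ring.
  apply Rmult_le_compat_l; [apply Rmult_le_pos; nra|exact Hfactors].
Qed.

Lemma prod_psi_pos_le1 x n : 0 <= x -> 0 < prod_psi a1 a2 b1 b2 x n <= 1.
Proof.
  intros Hx; induction n as [|n IH]; simpl; [lra|].
  destruct (h_iter_axis n x Hx) as [_ Hpos].
  pose proof (psi_pos_le1 (b2 * snd (hn n (0, x))) ltac:(nra)).
  split; [apply Rmult_lt_0_compat|]; nra.
Qed.

Lemma h1_iter_ge x n d q : 0 <= x -> 0 <= d -> (b2 + 4 * b1) * d <= 1 / 2 -> quadrant q ->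
  (forall j, (j < n)%nat -> axis_close d (snd (hn j (0, x))) (hn j q)) ->
  ((1 - a1) * b1 * (1 - (b2 + 4 * b1) * d)) ^ n * prod_psi a1 a2 b1 b2 x n * fst q
  <= fst (hn n q).
Proof.
  intros Hx Hd Hsmall Hq; induction n as [|n IH]; intros Hnear; [simpl; lra|].
  destruct (h_iter_axis n x Hx) as [_ Hpos].
  destruct (Hnear n ltac:(lia)) as [Hn1 Hn2].
  pose proof (h1_ge_near_axis (hn n q) _ d (h_iter_quadrant n q Hq) Hpos Hd Hsmall
                ltac:(lra) ltac:(lra)) as Hstep.
  assert (Hfactor : 0 <= (1 - a1) * b1 * psi (b2 * snd (hn n (0, x))) * (1 - (b2 + 4 * b1) * d)).
  { pose proof (psi_pos_le1 (b2 * snd (hn n (0, x))) ltac:(nra)).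
    repeat apply Rmult_le_pos; nra. }
  eapply Rle_trans; [|exact Hstep].
  replace (((1 - a1) * b1 * (1 - (b2 + 4 * b1) * d)) ^ Datatypes.S n
           * prod_psi a1 a2 b1 b2 x (Datatypes.S n) * fst q)
    with ((1 - a1) * b1 * psi (b2 * snd (hn n (0, x))) * (1 - (b2 + 4 * b1) * d)
          * (((1 - a1) * b1 * (1 - (b2 + 4 * b1) * d)) ^ n * prod_psi a1 a2 b1 b2 x n * fst q))
    by (simpl; ring).
  apply Rmult_le_compat_l; [exact Hfactor|apply IH].
  intros j Hj; apply Hnear; lia.
Qed.

Lemma h1_iter_growth_near_axis x n Q : 0 <= x -> 0 < Q ->
  2 * Q < ((1 - a1) * b1) ^ n * prod_psi a1 a2 b1 b2 x n ->
  exists del, 0 < del /\ forall q, quadrant q -> axis_close del x q -> Q * fst q <= fst (hn n q).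
Proof.
  intros Hx HQ Hgrowth.
  set (C := b2 + 4 * b1); pose proof (pos_INR n).
  set (d := 1 / (2 * C * (INR n + 1))).
  assert (Hd : 0 < d) by (unfold d, C; apply Rdiv_lt_0_compat; nra).
  assert (HnCd : INR n * (C * d) <= 1 / 2).
  { unfold d; replace (INR n * (C * (1 / (2 * C * (INR n + 1))))) with (INR n / (2 * (INR n + 1)))
      by (field; unfold C; lra).
    apply Rle_div_l; lra. }
  assert (HCd : C * d <= 1 / 2).
  { unfold d; replace (C * (1 / (2 * C * (INR n + 1)))) with (1 / (2 * (INR n + 1)))
      by (field; unfold C; lra).
    apply Rle_div_l; lra. }
  destruct (h_iter_near_axis x n d Hx Hd) as [del [Hdel Hnear]].
  exists del; split; [exact Hdel|]; intros q Hq Hclose.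
  pose proof (h1_iter_ge x n d q Hx ltac:(lra) HCd Hq
                (fun j Hj => Hnear q Hq Hclose j ltac:(lia))) as Hiter.
  assert (0 <= C * d) by (apply Rmult_le_pos; unfold C; lra).
  pose proof (pow_1_minus_ge (C * d) n ltac:(lra)).
  destruct Hq as [Hq1 _].
  rewrite Rpow_mult_distr in Hiter; fold C in Hiter.
  apply Rle_trans with (((1 - a1) * b1) ^ n * prod_psi a1 a2 b1 b2 x n * (1 / 2) * fst q);
    [apply Rmult_le_compat_r; lra|].
  eapply Rle_trans; [|exact Hiter].
  apply Rmult_le_compat_r; [exact Hq1|].
  replace (((1 - a1) * b1) ^ n * (1 - C * d) ^ n * prod_psi a1 a2 b1 b2 x n)
    with (((1 - a1) * b1) ^ n * prod_psi a1 a2 b1 b2 x n * (1 - C * d) ^ n) by ring.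
  apply Rmult_le_compat_l; [|lra].
  pose proof (prod_psi_pos_le1 x n Hx).
  apply Rmult_le_pos; [apply pow_le; nra|lra].
Qed.

Lemma pbar_is_lub : is_lub (fun y => exists x, 0 <= x <= 1 /\ y = g a2 x) (pbar a2).
Proof.
  apply Rsup_is_lub; [exists (g a2 0), 0; split; [lra|reflexivity]|].
  exists 8; intros y [x [Hx ->]]; pose proof (g_nonneg_le a2 x Ha2 Hx); lra.
Qed.

Lemma pbar_nonneg : 0 <= pbar a2.
Proof. rewrite <- (g_0 a2); apply pbar_is_lub; exists 0; split; [lra|reflexivity]. Qed.

Lemma h2_le_pbar q : quadrant q -> snd (hm q) <= pbar a2.
Proof.
  intros Hq; apply pbar_is_lub.
  exists (f2 b1 b2 q); split; [apply f2_bounds, Hq|reflexivity].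
Qed.

Lemma Psi_nonneg_le1 x n : 0 <= x -> 0 <= Psi a1 a2 b1 b2 x n <= 1.
Proof.
  intros Hx; pose proof (Rpower_root_pos_le1 _ n (prod_psi_pos_le1 x n Hx)).
  unfold Psi; lra.
Qed.

Lemma sigma_le_liminf x : 0 <= x <= pbar a2 ->
  sigma_T a1 a2 b1 b2 <= liminf (Psi a1 a2 b1 b2 x).
Proof.
  intros Hx; apply Rinf_is_glb.
  - exists (liminf (Psi a1 a2 b1 b2 0)), 0; split; [pose proof pbar_nonneg; lra|reflexivity].
  - exists 0; intros y [z [Hz ->]]; apply liminf_nonneg.
    intros n; apply Psi_nonneg_le1; lra.
  - exists x; split; [exact Hx|reflexivity].
Qed.

Hypothesis Hsigma : (1 - a1) * b1 * sigma_T a1 a2 b1 b2 > 1.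

Lemma axis_orbit_growth x Q : 0 <= x <= pbar a2 ->
  exists n, Q < ((1 - a1) * b1) ^ n * prod_psi a1 a2 b1 b2 x n.
Proof.
  intros Hx; apply pow_mul_unbounded; [intros n; apply prod_psi_pos_le1; lra|nra|].
  apply Rlt_le_trans with ((1 - a1) * b1 * sigma_T a1 a2 b1 b2); [lra|].
  apply Rmult_le_compat_l; [nra|apply sigma_le_liminf, Hx].
Qed.

Lemma h1_uniform_growth Q : 0 < Q -> exists N del, 0 < del /\
  forall q, quadrant q -> fst q < del -> snd q <= pbar a2 ->
  exists k, (k <= N)%nat /\ Q * fst q <= fst (hn k q).
Proof.
  intros HQ.
  destruct (interval_uniform_cover 0 (pbar a2) (fun x n del =>
              forall q, quadrant q -> axis_close del x q -> Q * fst q <= fst (hn n q)))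
    as [N [d [Hd Hcover]]].
  { intros x Hx; destruct (axis_orbit_growth x (2 * Q) Hx) as [n Hn].
    destruct (h1_iter_growth_near_axis x n Q ltac:(lra) HQ Hn) as [del Hdel].
    exists n, del; exact Hdel. }
  exists N, d; split; [exact Hd|]; intros q Hq Hq1 Hq2.
  destruct (Hcover (snd q) ltac:(destruct Hq; lra)) as [x [n [del [Hgood [HnN [Hddel Hclose]]]]]].
  exists n; split; [exact HnN|apply Hgood; [exact Hq|split; lra]].
Qed.

Lemma h1_eventually_exceeds K p0 : 0 < fst p0 -> quadrant p0 ->
  exists cbar, 0 < cbar < fst p0 /\ forall c, 0 < c <= cbar ->
    exists kbar, forall n, fst (hn n p0) >= c ->
      exists k, (k <= kbar)%nat /\ fst (hn (n + k) p0) > K * c.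
Proof.
  intros Hp0 Hq0.
  pose proof (Rmax_l K 1); pose proof (Rmax_r K 1); set (K' := Rmax K 1) in *.
  destruct (h1_uniform_growth (K' + 1) ltac:(lra)) as [N [del [Hdel Hunif]]].
  set (cbar := Rmin (fst p0 / (2 * K')) (del / (2 * K'))).
  assert (Hcbar_p0 : K' * cbar <= fst p0 / 2).
  { apply Rle_trans with (K' * (fst p0 / (2 * K'))); [apply Rmult_le_compat_l; [lra|apply Rmin_l]|].
    right; field; lra. }
  assert (Hcbar_del : K' * cbar <= del / 2).
  { apply Rle_trans with (K' * (del / (2 * K'))); [apply Rmult_le_compat_l; [lra|apply Rmin_r]|].
    right; field; lra. }
  assert (Hcbar : 0 < cbar) by (apply Rmin_pos; apply Rdiv_lt_0_compat; lra).
  exists cbar; split; [split; nra|]; intros c [Hc Hccbar]; exists N; intros n Hn.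
  destruct (Rlt_dec (K * c) (fst (hn n p0))) as [Hbig|Hsmall].
  { exists 0%nat; split; [lia|rewrite Nat.add_0_r; lra]. }
  assert (Hn_small : fst (hn n p0) <= K' * cbar).
  { apply Rle_trans with (K' * c); [nra|apply Rmult_le_compat_l; lra]. }
  destruct n as [|m]; [simpl in Hn_small; lra|].
  pose proof (h_iter_quadrant (Datatypes.S m) p0 Hq0) as Hqn.
  destruct (Hunif (hn (Datatypes.S m) p0) Hqn ltac:(lra)) as [k [Hk Hgrow]].
  { apply h2_le_pbar, h_iter_quadrant, Hq0. }
  exists k; split; [exact Hk|rewrite h_iter_add]; nra.
Qed.

End LimitingMap.

Theorem mainTheorem19 (a1 a2 b1 b2 : R) (p0 : R * R) :
  0 < b1 -> 0 < b2 ->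
  0 <= a1 < 1 -> 0 <= a2 < 1 ->
  (1 - a1) * b1 * sigma_T a1 a2 b1 b2 > 1 ->
  0 < fst p0 < 1 -> 0 < snd p0 < 1 -> fst p0 + snd p0 <= 1 ->
  exists cbar : R, 0 < cbar < fst p0 /\
    forall c : R, 0 < c <= cbar ->
      exists kbar : nat, forall n : nat,
        fst (h_iter a1 a2 b1 b2 n p0) >= c ->
        exists k : nat, (k <= kbar)%nat /\
          fst (h_iter a1 a2 b1 b2 (n + k) p0) > 3 / (2 * rr a1 a2 b1 b2) * c.
Proof.
  intros Hb1 Hb2 Ha1 Ha2 Hsigma Hp1 Hp2 _.
  apply h1_eventually_exceeds; try assumption; [lra|split; lra].
Qed.
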